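(* Let $T>0$ and $\beta>0$ be fixed. Then for every $R>0$, \[ \lim_{\mu\to 0}\ \sup_{|x|_{H^\beta}+\sqrt{\mu}\,|y|_{H}\leq R}\ \sup_{t\in[0,T]} \left|\Pi_1 S_\mu(t)(x,y)-S(t)x\right|_{H}=0, \] where the inner supremum is over $x\in H^\beta$, $y\in H$.
   Context: Let $D\subset\mathbb{R}^d$ be a bounded open domain with smooth boundary and $H=L^2(D)$ with norm $|\cdot|_H$ and inner product $\langle\cdot,\cdot\rangle_H$. Let $A$ be the realization in $H$ of the Laplacian with Dirichlet boundary conditions; let $\{e_k\}_{k\in\mathbb{N}}$ be a complete orthonormal system of $H$ and $0<\alpha_1\le\alpha_2\le\cdots\to\infty$ with $Ae_k=-\alpha_k e_k$. For $\beta\in\mathbb{R}$, $H^\beta$ is the completion of $C_0(D)$ with respect to $|x|_{H^\beta}^2=\sum_k \alpha_k^\beta|\langle x,e_k\rangle_H|^2$, and $\mathcal{H}_\beta:=H^\beta\times H^{\beta-1}$, with $\Pi_1(x,y)=x$, $\Pi_2(x,y)=y$. $S(t)$, $t\ge0$, denotes the semigroup generated by $A$. For $\mu>0$ let $A_\mu(x,y)=\frac1\mu(\mu y, Ax-y)$; it generates a strongly continuous group $S_\mu(t)$ on every $\mathcal{H}_\beta$ (these are compatible with each other); note $(x,y)\in H^\beta\times H\subset \mathcal{H}_0$ for $\beta>0$. *)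

From HB Require Import structures.
From mathcomp Require Import all_boot all_order all_algebra.
From mathcomp Require Import all_classical all_reals all_analysis.
Set Implicit Arguments. Unset Strict Implicit. Unset Printing Implicit Defensive.
Import Order.TTheory GRing.Theory Num.Theory.
Import numFieldNormedType.Exports.
Local Open Scope classical_set_scope.
Local Open Scope ring_scope.

(* Spectral model: via the orthonormal eigenbasis (e_k) of the Dirichlet
   Laplacian, H = L^2(D) is identified isometrically with square-summable
   coefficient sequences x : nat -> R (x k = <x, e_k>_H), and A e_k = -alpha k e_k.
   Indices start at 0 (alpha 0 is the paper's alpha_1). *)

Section Defs.
Variable R : realType.

Definition esqrt (e : \bar R) : \bar R :=
  match e with
  | EFin r => (Num.sqrt r)%:E
  | +oo%E => +oo%E
  | -oo%E => 0%E
  end.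

Definition Hsq (u : nat -> R) : \bar R := (\sum_(0 <= k <oo) ((u k) ^+ 2)%:E)%E.
Definition Hnorm (u : nat -> R) : \bar R := esqrt (Hsq u).
Definition inH (u : nat -> R) : Prop := (Hsq u < +oo)%E.

Definition Hbsq (alpha : nat -> R) (beta : R) (x : nat -> R) : \bar R :=
  (\sum_(0 <= k <oo) ((alpha k `^ beta) * (x k) ^+ 2)%:E)%E.
Definition inHb alpha beta (x : nat -> R) : Prop := (Hbsq alpha beta x < +oo)%E.
(* real-valued norms, meaningful on elements of the respective spaces *)
Definition Hbnorm alpha beta (x : nat -> R) : R := Num.sqrt (fine (Hbsq alpha beta x)).
Definition Hnormr (y : nat -> R) : R := Num.sqrt (fine (Hsq y)).

Definition expm2 (M : 'M[R]_2) : 'M[R]_2 :=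
  \matrix_(i, j) limn (series (fun n => (M ^+ n) i j / (n`!)%:R)).

(* the restriction of A_mu(x,y) = (y, (Ax - y)/mu) to the k-th mode,
   acting on column vectors (x_k, y_k) *)
Definition Amu_mode (alpha : nat -> R) (mu : R) (k : nat) : 'M[R]_2 :=
  \matrix_(i, j)
    (if (i : nat) == 0%N then (if (j : nat) == 0%N then 0 else 1)
     else (if (j : nat) == 0%N then - alpha k / mu else - 1 / mu)).

(* the group S_mu(t) generated by A_mu (diagonal in the eigenbasis):
   on each mode it is the matrix exponential exp(t A_mu,k) *)
Definition Smu (alpha : nat -> R) (mu t : R) (xy : (nat -> R) * (nat -> R))
  : (nat -> R) * (nat -> R) :=
  (fun k => let E := expm2 (t *: Amu_mode alpha mu k) in
            E 0 0 * xy.1 k + E 0 1 * xy.2 k,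
   fun k => let E := expm2 (t *: Amu_mode alpha mu k) in
            E 1 0 * xy.1 k + E 1 1 * xy.2 k).

Definition Pi1 (xy : (nat -> R) * (nat -> R)) : nat -> R := xy.1.

Definition Sheat (alpha : nat -> R) (t : R) (x : nat -> R) : nat -> R :=
  fun k => expR (- (alpha k * t)) * x k.

Definition sup_dev (alpha : nat -> R) (beta T Rr mu : R) : \bar R :=
  ereal_sup [set e | exists x y t,
     [/\ inHb alpha beta x, inH y,
         Hbnorm alpha beta x + Num.sqrt mu * Hnormr y <= Rr,
         0 <= t <= T &
         e = Hnorm (fun k => Pi1 (Smu alpha mu t (x, y)) k - Sheat alpha t x k)]].

End Defs.

From HB Require Import structures.
From mathcomp Require Import all_boot all_order all_algebra.
From mathcomp Require Import all_classical all_reals all_analysis.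
From mathcomp Require Import ring lra.
Set Implicit Arguments. Unset Strict Implicit. Unset Printing Implicit Defensive.
Import Order.TTheory GRing.Theory Num.Theory.
Import numFieldNormedType.Exports.
Local Open Scope classical_set_scope.
Local Open Scope ring_scope.

(* In the eigenbasis S_mu(t) acts mode by mode through exp(t A_k),
   A_k = [[0, 1], [-alpha_k/mu, -1/mu]], so each column (u, v) of exp(t A_k)
   solves u' = v, mu v' = - alpha_k u - v.  Lyapunov functions for this damped
   oscillator give, for t >= 0, |exp(t A_k)_01| <= 2 mu, |exp(t A_k)_00| <= 1 and
   |exp(t A_k)_00 - e^(-alpha_k t)|^2 <= mu alpha_k + mu^2 alpha_k^3 t / 2.
   Modes with alpha_k >= A are small thanks to the H^beta weight (the gap is at
   most 4 <= 4 (alpha_k / A)^beta), the others thanks to the last bound; hence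
   the squared deviation is at most 8 R^2 / A^beta + mu K_A.  Taking A large and
   then mu small proves the claim. *)

Section Expm2.
Variable R : realType.

Lemma mul2mxE (A B : 'M[R]_2) i j : (A * B) i j = A i 0 * B 0 j + A i 1 * B 1 j.
Proof.
rewrite -mulmxE mxE !big_ord_recl big_ord0 addr0.
have -> : ord0 = 0 :> 'I_2 by apply/val_inj.
by have -> : lift ord0 ord0 = 1 :> 'I_2 by apply/val_inj.
Qed.

Lemma expm2_0 : expm2 (0 : 'M[R]_2) = 1.
Proof.
apply/matrixP => i j; rewrite mxE; apply: lim_near_cst => //.
near=> n; rewrite -[n]prednK; last by near: n; exists 1%N.
rewrite /series /= big_nat_recl // big1 ?addr0 => [|k _].
  by rewrite expr0 fact0 divr1.
by rewrite expr0n mxE mul0r.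
Unshelve. all: by end_near.
Qed.

Lemma is_cvg_pseries_exp_dominated (d : nat -> R) (C m x : R) :
  0 <= C -> 0 <= m -> (forall n, `|d n| <= C * (m ^+ n / n`!%:R)) ->
  cvgn (pseries d x).
Proof.
move=> C0 m0 hd; apply: normed_cvg.
apply: (@series_le_cvg _ _ (C *: exp_coeff (m * `|x|))) => [n|n|n|].
- exact: normr_ge0.
- by rewrite /= mulr_ge0 // exp_coeff_ge0 // mulr_ge0.
- have -> : (C *: exp_coeff (m * `|x|)) n = C * (m ^+ n / n`!%:R) * `|x| ^+ n.
    rewrite scalrfctE /exp_coeff /= -[C *: _]/(C * _) exprMn; ring.
  by rewrite /= normrM normrX ler_wpM2r ?exprn_ge0.
- exact/is_cvg_seriesZ/is_cvg_series_exp_coeff.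
Qed.

Variable M : 'M[R]_2.

Let m : R := `|M 0 0| + `|M 0 1| + `|M 1 0| + `|M 1 1|.

Let m_ge0 : 0 <= m. Proof. by rewrite !addr_ge0. Qed.

Lemma exprn_mx2_entry_le n i j : `|(M ^+ n) i j| <= m ^+ n.
Proof.
elim: n i j => [|n IH] i j.
  by rewrite expr0 !mxE; case: (i == j); rewrite ?normr1 ?normr0.
rewrite exprS mul2mxE exprS (le_trans (ler_normD _ _)) // !normrM.
have rowi : `|M i 0| + `|M i 1| <= m.
  have i01 : i = 0 \/ i = 1 by case: i => [[|[|]]] // ?; [left|right]; apply/val_inj.
  have := normr_ge0 (M 0 0); have := normr_ge0 (M 0 1).
  have := normr_ge0 (M 1 0); have := normr_ge0 (M 1 1).
  by rewrite /m; case: i01 => ->; lra.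
apply: (le_trans (y := `|M i 0| * m ^+ n + `|M i 1| * m ^+ n)).
  by rewrite lerD ?ler_wpM2l.
by rewrite -mulrDl ler_wpM2r ?exprn_ge0.
Qed.

Definition expm2_coef k i j n : R := (M ^+ (k + n)) i j / n`!%:R.

Lemma expm2_scaleE t i j : expm2 (t *: M) i j = limn (pseries (expm2_coef 0 i j) t).
Proof.
rewrite mxE /pseries /expm2_coef; congr (limn (series _)); apply/funext => n /=.
by rewrite exprZn mxE add0n; lra.
Qed.

Lemma pseries_diffs_expm2_coef k i j :
  pseries_diffs (expm2_coef k i j) = expm2_coef k.+1 i j.
Proof.
apply/funext => n; rewrite /pseries_diffs /expm2_coef factS natrM addnS -addSn.
have n1 : n.+1%:R != 0 :> R by rewrite pnatr_eq0.
have nf : n`!%:R != 0 :> R by rewrite pnatr_eq0 -lt0n fact_gt0.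
by field; rewrite nf nat1r n1.
Qed.

Lemma is_cvg_pseries_expm2_coef k i j x : cvgn (pseries (expm2_coef k i j) x).
Proof.
apply: (@is_cvg_pseries_exp_dominated _ (m ^+ k) m); rewrite ?exprn_ge0 // => n.
rewrite /expm2_coef normrM mulrA -exprD normfV normr_nat.
by rewrite ler_wpM2r ?invr_ge0 // exprn_mx2_entry_le.
Qed.

Lemma is_derive_expm2_scale (t : R) i j :
  is_derive t 1 (fun s => expm2 (s *: M) i j) ((M * expm2 (t *: M)) i j).
Proof.
under [fun s => _]funext => s do rewrite expm2_scaleE.
apply: is_derive_eq.
  apply: (@pseries_snd_diffs _ _ (`|t| + 1));
    rewrite ?pseries_diffs_expm2_coef; try exact: is_cvg_pseries_expm2_coef.
  by rewrite [ltRHS]ger0_norm ?addr_ge0 // ltrDl.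
rewrite pseries_diffs_expm2_coef mul2mxE !expm2_scaleE.
have -> : pseries (expm2_coef 1 i j) t =
    series (M i 0 *: (fun n => expm2_coef 0 0 j n * t ^+ n)
          + M i 1 *: (fun n => expm2_coef 0 1 j n * t ^+ n)).
  congr series; apply/funext => n /=.
  by rewrite /expm2_coef add1n exprS mul2mxE !fctE /= !add0n /GRing.scale /=; ring.
have c0 := @is_cvg_pseries_expm2_coef 0 0 j t.
have c1 := @is_cvg_pseries_expm2_coef 0 1 j t.
rewrite lim_seriesD; [|exact: is_cvg_seriesZ c0|exact: is_cvg_seriesZ c1].
by rewrite (lim_seriesZ _ c0) (lim_seriesZ _ c1).
Qed.

End Expm2.

Lemma le_split_powR (R : realType) (beta a a0 A b c d : R) :
  0 < beta -> 0 < a0 -> a0 <= a -> 0 < A -> 0 <= b -> 0 <= c ->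
  d <= b -> (a < A -> d <= c) -> d <= (b / A `^ beta + c / a0 `^ beta) * a `^ beta.
Proof.
move=> beta_gt0 a0_gt0 a0_le_a A_gt0 b_ge0 c_ge0 d_le_b low.
have a_gt0 : 0 < a := lt_le_trans a0_gt0 a0_le_a.
have le_ratio x y : 0 <= x -> 0 < y -> y <= a -> x <= x / y `^ beta * a `^ beta.
  move=> x_ge0 y_gt0 y_le_a; rewrite mulrAC ler_pdivlMr ?powR_gt0 // ler_wpM2l //.
  by rewrite ge0_ler_powR ?nnegrE ?(ltW beta_gt0) ?(ltW y_gt0) ?(ltW a_gt0).
have b_term : 0 <= b / A `^ beta * a `^ beta by rewrite !mulr_ge0 ?invr_ge0 ?powR_ge0.
have c_term : 0 <= c / a0 `^ beta * a `^ beta by rewrite !mulr_ge0 ?invr_ge0 ?powR_ge0.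
rewrite mulrDl; case: (leP A a) => [A_le_a|a_lt_A].
- by rewrite (le_trans d_le_b) // ler_wpDr // le_ratio.
- by rewrite (le_trans (low a_lt_A)) // ler_wpDl // le_ratio.
Qed.

Lemma squeeze_cvge0 (R : realType) T (F : set_system T) (FF : Filter F) (f : T -> \bar R) :
  (\forall t \near F, 0 <= f t)%E ->
  (forall e : R, (0 < e)%R -> \forall t \near F, (f t <= e%:E)%E) ->
  f @ F --> 0%E.
Proof.
move=> f_ge0 f_le; apply/fine_cvgP; split.
  near=> t; rewrite ge0_fin_numE; last by near: t.
  by rewrite (le_lt_trans _ (ltry 1)) //; near: t; exact: f_le.
apply/cvgrPdist_le => e e_gt0; near=> t.
have ft_ge0 : (0 <= f t)%E by near: t.
have ft_le : (f t <= e%:E)%E by near: t; exact: f_le.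
have ft_fin : f t \is a fin_num by rewrite ge0_fin_numE // (le_lt_trans ft_le) ?ltry.
by rewrite sub0r normrN ger0_norm ?fine_ge0 // -lee_fin fineK.
Unshelve. all: by end_near.
Qed.

Section DampedOscillator.
Variable R : realType.

Lemma ler_derive_le_at0 (f df : R -> R) (c : R) :
  (forall x, is_derive x (1 : R) f (df x)) -> (forall x, 0 < x -> df x <= c) ->
  forall t, 0 <= t -> f t <= f 0 + c * t.
Proof.
move=> fdf df_le t t0.
pose g := f - c *: id.
have gdg (x : R) : is_derive x 1 g (df x - c *: 1).
  exact: is_deriveB (fdf x) (is_deriveZ c (is_derive_id x 1)).
have gD (x : R) : derivable g x 1 by have [] := gdg x.
suff : g t <= g 0 by rewrite /g !fctE /GRing.scale /= mulr0 subr0 lerBlDr addrC.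
apply: (@ler0_derive1_le_cc R g 0 t) => //.
- move=> x; rewrite in_itv /= => /andP[x0 _].
  by rewrite derive1E derive_val /GRing.scale /= mulr1 subr_le0 df_le.
- by apply: derivable_within_continuous => x _; exact: gD.
- by rewrite in_itv /= lexx t0.
- by rewrite in_itv /= lexx t0.
Qed.

Definition damped_osc (mu a : R) (u v : R -> R) :=
  forall t, is_derive t (1 : R) u (v t) /\ is_derive t (1 : R) v ((- (a * u t) - v t) / mu).

Variables (mu a : R) (u v : R -> R).
Hypotheses (mu_gt0 : 0 < mu) (a_gt0 : 0 < a) (uv : damped_osc mu a u v).

Lemma damped_osc_sqr_le_init01 : u 0 = 0 -> v 0 = 1 ->
  forall t, 0 <= t -> u t ^+ 2 <= 4 * mu ^+ 2.
Proof.
move=> u0 v0 t t0.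
(* The last term cancels the cross terms 4 a mu u v in the derivative. *)
pose L := (mu *: v + u) ^+ 2 + mu ^+ 2 *: v ^+ 2 + (2 * a * mu) *: u ^+ 2.
have dL (x : R) : is_derive x 1 L (- 2 * a * u x ^+ 2 - 2 * mu * v x ^+ 2).
  have [du dv] := uv x.
  apply: is_derive_eq (is_deriveD (is_deriveD
    (is_deriveX 2 (is_deriveD (is_deriveZ mu dv) du))
    (is_deriveZ (mu ^+ 2) (is_deriveX 2 dv))) (is_deriveZ (2 * a * mu) (is_deriveX 2 du))) _.
  rewrite ?fctE /= ?expr1 /GRing.scale /=.
  by field; rewrite gt_eqF.
have dL_le0 x : 0 < x -> - 2 * a * u x ^+ 2 - 2 * mu * v x ^+ 2 <= 0.
  move=> _; have := mulr_ge0 (ltW a_gt0) (sqr_ge0 (u x)).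
  have := mulr_ge0 (ltW mu_gt0) (sqr_ge0 (v x)); lra.
have := ler_derive_le_at0 dL dL_le0 t0.
rewrite mul0r addr0 /L !fctE /= u0 v0 /GRing.scale /=.
have := sqr_ge0 (mu * v t + u t + mu * v t).
have := mulr_ge0 (mulr_ge0 (ltW a_gt0) (ltW mu_gt0)) (sqr_ge0 (u t)).
rewrite !expr2; nra.
Qed.

Lemma damped_osc_sqr_le1_init10 : u 0 = 1 -> v 0 = 0 ->
  forall t, 0 <= t -> u t ^+ 2 <= 1.
Proof.
move=> u0 v0 t t0.
pose E := mu *: v ^+ 2 + a *: u ^+ 2.
have dE (x : R) : is_derive x 1 E (- 2 * v x ^+ 2).
  have [du dv] := uv x.
  apply: is_derive_eq (is_deriveD (is_deriveZ mu (is_deriveX 2 dv))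
    (is_deriveZ a (is_deriveX 2 du))) _.
  rewrite ?fctE /= ?expr1 /GRing.scale /=.
  by field; rewrite gt_eqF.
have dE_le0 x : 0 < x -> - 2 * v x ^+ 2 <= 0.
  by move=> _; have := sqr_ge0 (v x); lra.
have := ler_derive_le_at0 dE dE_le0 t0.
rewrite mul0r addr0 /E !fctE /= u0 v0 /GRing.scale /=.
rewrite expr0n expr1n mulr0 add0r mulr1 => Et_le.
rewrite -(ler_pM2l a_gt0) mulr1; have := mulr_ge0 (ltW mu_gt0) (sqr_ge0 (v t)).
lra.
Qed.

Lemma damped_osc_heat_gap_sqr_le : u 0 = 1 -> v 0 = 0 ->
  forall t, 0 <= t -> (u t - expR (- (a * t))) ^+ 2 <= mu * a + mu ^+ 2 * a ^+ 3 * t / 2.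
Proof.
move=> u0 v0 t t0.
pose q (s : R) := expR (- (a * s)).
have dq (x : R) : is_derive x 1 q (- a * q x).
  rewrite mulrC; apply: is_derive1_comp.
  apply: is_derive_eq (is_deriveN (is_deriveZ a (is_derive_id x 1))) _.
  by rewrite /GRing.scale /= mulr1.
(* w := u - q and s := v + a q solve w' = s, mu s' = - a w - s - mu a^2 q: the
   energy of (w, s) is fed only by the source term, at rate <= mu^2 a^4 / 2. *)
pose L := mu *: (v + a *: q) ^+ 2 + a *: (u - q) ^+ 2.
pose dL x := - 2 * (v x + a * q x) ^+ 2 - 2 * mu * a ^+ 2 * q x * (v x + a * q x).
have dL_eq (x : R) : is_derive x 1 L (dL x).
  have [du dv] := uv x.
  apply: is_derive_eq (is_deriveD (is_deriveZ mu (is_deriveX 2 (is_deriveD dv (is_deriveZ a (dq x)))))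
    (is_deriveZ a (is_deriveX 2 (is_deriveB du (dq x))))) _.
  rewrite ?fctE /= ?expr1 /GRing.scale /= /dL.
  by field; rewrite gt_eqF.
have dL_le x : 0 < x -> dL x <= mu ^+ 2 * a ^+ 4 / 2.
  move=> x0; have q_ge0 : 0 <= q x by exact: expR_ge0.
  have q_le1 : q x <= 1 by rewrite expR_le1 oppr_le0 mulr_ge0 // ltW.
  have qq_le1 : q x ^+ 2 <= 1 by rewrite expr_le1.
  have := sqr_ge0 (2 * (v x + a * q x) + mu * a ^+ 2 * q x).
  have := ler_wpM2l (mulr_ge0 (sqr_ge0 mu) (exprn_ge0 4 (ltW a_gt0))) qq_le1.
  rewrite /dL !expr2 => *; nra.
have := ler_derive_le_at0 dL_eq dL_le t0.
rewrite /L !fctE /= /q u0 v0 mulr0 oppr0 expR0 /GRing.scale /= add0r subrr.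
rewrite expr0n mulr0 addr0 mulr1 => Lt_le.
rewrite -(ler_pM2l a_gt0).
have -> : a * (mu * a + mu ^+ 2 * a ^+ 3 * t / 2) = mu * a ^+ 2 + mu ^+ 2 * a ^+ 4 / 2 * t.
  by ring.
have := mulr_ge0 (ltW mu_gt0) (sqr_ge0 (v t + a * expR (- (a * t)))).
lra.
Qed.
End DampedOscillator.

Section Modes.
Variable R : realType.
Variables (alpha : nat -> R) (mu : R) (k : nat).
Hypothesis mu_gt0 : 0 < mu.

Lemma damped_osc_expm2_Amu_mode j :
  damped_osc mu (alpha k) (fun t => expm2 (t *: Amu_mode alpha mu k) 0 j)
    (fun t => expm2 (t *: Amu_mode alpha mu k) 1 j).
Proof.
move=> t; split; apply: is_derive_eq (is_derive_expm2_scale _ t _ j) _;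
  by rewrite mul2mxE !mxE /=; ring.
Qed.

Lemma mode_dev_sqr_le (beta A T t x y : R) :
  0 < alpha 0%N -> alpha 0%N <= alpha k -> 0 < beta -> mu <= 1 -> 0 < A ->
  0 <= t -> t <= T ->
  (expm2 (t *: Amu_mode alpha mu k) 0 0 * x + expm2 (t *: Amu_mode alpha mu k) 0 1 * y
     - expR (- (alpha k * t)) * x) ^+ 2
  <= 2 * (4 / A `^ beta + mu * (A + A ^+ 3 * T / 2) / alpha 0%N `^ beta)
       * (alpha k `^ beta * x ^+ 2) + 8 * mu ^+ 2 * y ^+ 2.
Proof.
move=> a0_gt0 a0_le_ak beta_gt0 mu_le1 A_gt0 t_ge0 t_le_T.
have ak_gt0 : 0 < alpha k := lt_le_trans a0_gt0 a0_le_ak.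
have E0 i j : expm2 (0 *: Amu_mode alpha mu k) i j = (i == j)%:R.
  by rewrite scale0r expm2_0 mxE.
have osc j := damped_osc_expm2_Amu_mode j.
have p_le := damped_osc_sqr_le_init01 mu_gt0 ak_gt0 (osc 1) (E0 0 1) (E0 1 1) t_ge0.
have u_le1 := damped_osc_sqr_le1_init10 mu_gt0 ak_gt0 (osc 0) (E0 0 0) (E0 1 0) t_ge0.
have gap_le := damped_osc_heat_gap_sqr_le mu_gt0 ak_gt0 (osc 0) (E0 0 0) (E0 1 0) t_ge0.
move: p_le u_le1 gap_le => /=.
set u := expm2 _ 0 0; set p := expm2 _ 0 1; set q := expR _ => p_le u_le1 gap_le.
have q_ge0 : 0 <= q := expR_ge0 _.
have q_le1 : q <= 1 by rewrite expR_le1 oppr_le0 mulr_ge0 // ltW.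
have uq_le : (u - q) ^+ 2 <= (4 / A `^ beta + mu * (A + A ^+ 3 * T / 2) / alpha 0%N `^ beta)
    * alpha k `^ beta.
  apply: le_split_powR => //.
  - have T_ge0 := le_trans t_ge0 t_le_T; have A_ge0 := ltW A_gt0.
    by rewrite mulr_ge0 ?addr_ge0 ?divr_ge0 ?mulr_ge0 ?exprn_ge0 // ltW.
  - have qq_le1 : q * q <= 1 by rewrite -[1]mulr1 ler_pM.
    by move: u_le1 (sqr_ge0 (u + q)); rewrite !expr2 => *; nra.
  - move=> ak_lt_A; apply: le_trans gap_le _.
    have ak3 : alpha k ^+ 3 * t <= A ^+ 3 * T.
      by rewrite ler_pM ?exprn_ge0 ?(ltW ak_gt0) // lerXn2r ?nnegrE ?ltW.
    have mu2 : mu ^+ 2 <= mu by rewrite expr2 ger_pMr.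
    have h1 : mu * alpha k <= mu * A by rewrite ler_wpM2l ?ltW.
    have h2 : mu ^+ 2 * (alpha k ^+ 3 * t) <= mu * (A ^+ 3 * T).
      by rewrite ler_pM ?exprn_ge0 ?mulr_ge0 ?exprn_ge0 // ltW.
    lra.
move: uq_le; set G := _ + _ => uq_le.
have -> : u * x + p * y - q * x = (u - q) * x + p * y by ring.
have := sqr_ge0 ((u - q) * x - p * y).
have := ler_wpM2r (sqr_ge0 x) uq_le; have := ler_wpM2r (sqr_ge0 y) p_le.
rewrite ?sqrrD ?sqrrB ?exprMn; lra.
Qed.
End Modes.

Section Norms.
Variable R : realType.
Implicit Types (alpha d x y : nat -> R) (beta : R).
Local Open Scope ereal_scope.

Lemma esqrt_ge0 (e : \bar R) : 0 <= esqrt e.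
Proof. by case: e => [r| |] //=; rewrite lee_fin sqrtr_ge0. Qed.

Lemma esqrt_le (e : \bar R) (B : R) : 0 <= e -> e <= B%:E -> esqrt e <= (Num.sqrt B)%:E.
Proof. by case: e => [r| |] //= r0 rB; rewrite lee_fin ler_wsqrtr // -lee_fin. Qed.

Lemma Hsq_ge0 x : 0 <= Hsq x.
Proof. by apply: nneseries_ge0 => n _ _; rewrite lee_fin sqr_ge0. Qed.

Lemma Hbsq_ge0 alpha beta x : 0 <= Hbsq alpha beta x.
Proof. by apply: nneseries_ge0 => n _ _; rewrite lee_fin mulr_ge0 ?powR_ge0 ?sqr_ge0. Qed.

Lemma HsqE x : inH x -> Hsq x = (Hnormr x ^+ 2)%:E.
Proof.
move=> hx; rewrite /Hnormr sqr_sqrtr ?fine_ge0 ?Hsq_ge0 // fineK //.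
by rewrite ge0_fin_numE ?Hsq_ge0.
Qed.

Lemma HbsqE alpha beta x : inHb alpha beta x -> Hbsq alpha beta x = (Hbnorm alpha beta x ^+ 2)%:E.
Proof.
move=> hx; rewrite /Hbnorm sqr_sqrtr ?fine_ge0 ?Hbsq_ge0 // fineK //.
by rewrite ge0_fin_numE ?Hbsq_ge0.
Qed.

Lemma Hsq_le_Hbsq_Hsq alpha beta d x y (C D : R) : (0 <= C)%R -> (0 <= D)%R ->
  (forall k, d k ^+ 2 <= C * (alpha k `^ beta * x k ^+ 2) + D * y k ^+ 2)%R ->
  Hsq d <= C%:E * Hbsq alpha beta x + D%:E * Hsq y.
Proof.
move=> C_ge0 D_ge0 d_le.
have wx_ge0 k : (0 <= alpha k `^ beta * x k ^+ 2)%R by rewrite mulr_ge0 ?powR_ge0 ?sqr_ge0.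
rewrite /Hsq /Hbsq -nneseriesZl => [|k _]; last by rewrite lee_fin.
rewrite -nneseriesZl => [|k _]; last by rewrite lee_fin sqr_ge0.
rewrite -nneseriesD => [|k _ _|k _ _]; last 2 first.
- by rewrite -EFinM lee_fin mulr_ge0.
- by rewrite -EFinM lee_fin mulr_ge0 ?sqr_ge0.
apply: lee_nneseries => [k _ _|k _]; first by rewrite lee_fin sqr_ge0.
by rewrite -!EFinM -EFinD lee_fin.
Qed.

Lemma Hnorm_le_ball alpha beta d x y (mu Rr C c : R) :
  (0 <= C)%R -> (0 <= c)%R -> (0 < mu)%R -> inHb alpha beta x -> inH y ->
  (Hbnorm alpha beta x + Num.sqrt mu * Hnormr y <= Rr)%R ->
  (forall k, d k ^+ 2 <= C * (alpha k `^ beta * x k ^+ 2) + c * mu ^+ 2 * y k ^+ 2)%R ->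
  Hnorm d <= (Num.sqrt ((C + c * mu) * Rr ^+ 2))%:E.
Proof.
move=> C_ge0 c_ge0 mu_gt0 hx hy ball d_le; apply: esqrt_le; first exact: Hsq_ge0.
apply: le_trans (Hsq_le_Hbsq_Hsq C_ge0 _ d_le) _.
  exact: mulr_ge0 c_ge0 (exprn_ge0 2 (ltW mu_gt0)).
rewrite HsqE // HbsqE // -!EFinM -EFinD lee_fin.
move: ball; set p := Hbnorm _ _ _; set r := Hnormr _ => ball.
have p_ge0 : (0 <= p)%R by exact: sqrtr_ge0.
have r_ge0 : (0 <= r)%R by exact: sqrtr_ge0.
have sr_ge0 : (0 <= Num.sqrt mu * r)%R by rewrite mulr_ge0 ?sqrtr_ge0.
have p2 : (p ^+ 2 <= Rr ^+ 2)%R.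
  by rewrite lerXn2r ?nnegrE ?(le_trans _ ball) ?lerDl ?addr_ge0.
have r2 : (mu * r ^+ 2 <= Rr ^+ 2)%R.
  rewrite -[mu](sqr_sqrtr (ltW mu_gt0)) -exprMn.
  by rewrite lerXn2r ?nnegrE ?(le_trans _ ball) ?lerDr ?addr_ge0.
have := ler_wpM2l C_ge0 p2; have := ler_wpM2l (mulr_ge0 c_ge0 (ltW mu_gt0)) r2.
by rewrite !mulrDl; move=> *; nra.
Qed.

End Norms.

Section SupDev.
Variable R : realType.
Variables (alpha : nat -> R) (beta T Rr : R).
Hypotheses (a0_gt0 : 0 < alpha 0%N) (a0_le : forall k, alpha 0%N <= alpha k).
Hypotheses (beta_gt0 : 0 < beta) (T_ge0 : 0 <= T) (Rr_ge0 : 0 <= Rr).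

Lemma sup_dev_ge0 mu : (0 <= sup_dev alpha beta T Rr mu)%E.
Proof.
have Hbsq0 : Hbsq alpha beta (fun=> 0) = 0%E.
  by apply: eseries0 => k _ _; rewrite expr0n mulr0.
have Hsq0 : Hsq (fun=> 0 : R) = 0%E by apply: eseries0 => k _ _; rewrite expr0n.
apply: le_ereal_sup_tmp; exists (Hnorm (fun k =>
    Pi1 (Smu alpha mu 0 (fun=> 0, fun=> 0)) k - Sheat alpha 0 (fun=> 0) k)).
  exists (fun=> 0), (fun=> 0), 0; split => //.
  - by rewrite /inHb Hbsq0.
  - by rewrite /inH Hsq0.
  - by rewrite /Hbnorm /Hnormr Hbsq0 Hsq0 /= sqrtr0 mulr0 addr0.
  - by rewrite lexx T_ge0.
exact: esqrt_ge0.
Qed.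

Lemma sup_dev_le mu A : 0 < mu -> mu <= 1 -> 0 < A ->
  (sup_dev alpha beta T Rr mu <=
   (Num.sqrt (8 * Rr ^+ 2 / A `^ beta
     + mu * (2 * ((A + A ^+ 3 * T / 2) / alpha 0%N `^ beta) * Rr ^+ 2 + 8 * Rr ^+ 2)))%:E)%E.
Proof.
move=> mu_gt0 mu_le1 A_gt0.
have -> : 8 * Rr ^+ 2 / A `^ beta
    + mu * (2 * ((A + A ^+ 3 * T / 2) / alpha 0%N `^ beta) * Rr ^+ 2 + 8 * Rr ^+ 2) =
  (2 * (4 / A `^ beta + mu * (A + A ^+ 3 * T / 2) / alpha 0%N `^ beta) + 8 * mu)
    * Rr ^+ 2 by ring.
apply: ge_ereal_sup => _ [x [y [t [hx hy ball /andP[t_ge0 t_le_T] ->]]]].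
apply: Hnorm_le_ball hx hy ball _ => //.
- have A_ge0 := ltW A_gt0.
  have cA_ge0 : 0 <= A + A ^+ 3 * T / 2 by rewrite addr_ge0 // !mulr_ge0 ?exprn_ge0.
  by rewrite mulr_ge0 // addr_ge0 ?divr_ge0 ?mulr_ge0 ?powR_ge0 // ltW.
- move=> k; rewrite /Pi1 /Smu /Sheat /=.
  exact: mode_dev_sqr_le.
Qed.

End SupDev.

Theorem lemma3p2 (R : realType) (alpha : nat -> R)
  (alpha_pos : 0 < alpha 0%N)
  (alpha_mono : forall k, alpha k <= alpha k.+1)
  (alpha_infty : alpha @ \oo --> +oo)
  (T beta : R) (T_pos : 0 < T) (beta_pos : 0 < beta) :
  forall Rr : R, 0 < Rr ->
    (fun mu : R => sup_dev alpha beta T Rr mu) @ 0^'+ --> 0%E.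
Proof.
move=> Rr Rr_gt0.
have a0_le k : alpha 0%N <= alpha k.
  by elim: k => [//|k IH]; exact: le_trans IH (alpha_mono k).
apply: squeeze_cvge0 => [|e e_gt0].
  by near=> mu; apply: sup_dev_ge0; apply: ltW.
have [A A_gt0 AbE] : exists2 A, 0 < A & 8 * Rr ^+ 2 / A `^ beta = e ^+ 2 / 2.
  have X_gt0 : 0 < 16 * Rr ^+ 2 / e ^+ 2 by rewrite divr_gt0 ?mulr_gt0 ?exprn_gt0.
  exists ((16 * Rr ^+ 2 / e ^+ 2) `^ beta^-1); first exact: powR_gt0.
  rewrite -powRrM mulVf ?gt_eqF // powRr1 ?ltW //.
  by field; rewrite !gt_eqF.
set K := 2 * ((A + A ^+ 3 * T / 2) / alpha 0%N `^ beta) * Rr ^+ 2 + 8 * Rr ^+ 2.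
have muK : mu * K @[mu --> 0^'+] --> 0.
  rewrite -[X in _ --> X](mul0r K); apply: cvgMr_tmp.
  exact: (cvg_at_right_filter (f := id) cvg_id).
near=> mu.
have mu_gt0 : 0 < mu by near: mu; exact: nbhs_right_gt.
have mu_le1 : mu <= 1 by near: mu; exact: nbhs_right_le.
have muK_lt : mu * K < e ^+ 2 / 2.
  by near: mu; apply: cvgr_lt muK _ _; rewrite divr_gt0 ?exprn_gt0.
apply: le_trans (sup_dev_le Rr alpha_pos a0_le beta_pos (ltW T_pos) mu_gt0 mu_le1 A_gt0) _.
rewrite -/K AbE lee_fin -[leRHS](ger0_norm (ltW e_gt0)) -sqrtr_sqr ler_wsqrtr //; lra.
Unshelve. all: by end_near.
Qed.
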